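(* Let $q$ be a power of an odd prime $p$ such that $8\mid q-1$ and $\sqrt{2}\in\mathbb{F}_q$, and let $\mathfrak{C}/\mathbb{F}_q$ be the genus $2$ hyperelliptic curve $y^2=x^5+x$. (i) If $p\neq 3,5$, then $\mathrm{Aut}(\mathfrak{C}/\mathbb{F}_q)\simeq\tilde{S}_4$ (in particular $\mathrm{Aut}(\mathfrak{C}/\mathbb{F}_q)=\mathrm{Aut}(\mathfrak{C})$, of order $48$). (ii) If $p=5$, then $\mathrm{Aut}(\mathfrak{C}/\mathbb{F}_q)\simeq\tilde{S}_5$ (in particular $\mathrm{Aut}(\mathfrak{C}/\mathbb{F}_q)=\mathrm{Aut}(\mathfrak{C})$, of order $240$).
   Context: For a genus $2$ curve $\mathfrak{C}:y^2=f(x)$ over $\mathbb{F}_q$ ($q$ odd), automorphisms of $\mathfrak{C}$ over $\overline{\mathbb{F}}_q$ correspond to matrices $M=\begin{pmatrix}a&b\\c&d\end{pmatrix}\in\mathrm{GL}_2(\overline{\mathbb{F}}_q)$ acting by $x\mapsto \frac{ax+b}{cx+d}$, $y\mapsto \frac{(ad-bc)y}{(cx+d)^3}$ (and preserving the curve). $\mathrm{Aut}(\mathfrak{C})$ denotes the full automorphism group over $\overline{\mathbb{F}}_q$ (including the hyperelliptic involution, corresponding to $-I$), and $\mathrm{Aut}(\mathfrak{C}/\mathbb{F}_q)$ its subgroup of automorphisms whose matrix has entries in $\mathbb{F}_q$. $\tilde{S}_4$ denotes the group of order $48$ (a double cover of $S_4$) which is the full automorphism group over $\overline{\mathbb{F}}_p$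 of $y^2=x^5-x$ for $p\neq 2,3,5$; $\tilde{S}_5$ denotes the group of order $240$ which is the full automorphism group over $\overline{\mathbb{F}}_5$ of $y^2=x^5-x$. *)

From HB Require Import structures.
From mathcomp Require Import all_boot all_order all_algebra all_fingroup all_field.
Set Implicit Arguments. Unset Strict Implicit. Unset Printing Implicit Defensive.
Import GRing.Theory.
Local Open Scope ring_scope.

(* Genus 2 curve y^2 = f(x), deg f <= 6.  A matrix M = [[a,b],[c,d]]
   acts by x |-> (ax+b)/(cx+d), y |-> (ad-bc) y/(cx+d)^3.  It maps the
   curve to itself iff M is invertible and
     (cx+d)^6 f((ax+b)/(cx+d)) = (ad-bc)^2 f(x),
   i.e. (homogenising f in degree 6)
     sum_{i<=6} f_i (aX+b)^i (cX+d)^(6-i) = det(M)^2 f(X). *)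
Definition is_aut_mx (K : fieldType) (f : {poly K}) (M : 'M[K]_2) : bool :=
  let a := M 0 0 in let b := M 0 1 in let c := M 1 0 in let d := M 1 1 in
  (\det M != 0) &&
  (\sum_(i < 7) f`_i *: ((a *: 'X + b%:P) ^+ i * (c *: 'X + d%:P) ^+ (6 - i))
     == (\det M) ^+ 2 *: f).

Definition aut_set (F : finFieldType) (f : {poly F}) : {set 'M[F]_2} :=
  [set M | is_aut_mx f M].

Definition is_alg_closure (F : fieldType) (L : closedFieldType)
    (iota : {rmorphism F -> L}) : Prop :=
  forall x : L, exists2 P : {poly F}, P != 0 & root (map_poly iota P) x.

Definition all_auts_rational (F : finFieldType) (f : {poly F}) (L : fieldType)
    (iota : {rmorphism F -> L}) : Prop :=
  forall M : 'M[L]_2, is_aut_mx (map_poly iota f) M ->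
    exists2 N, N \in aut_set f & M = map_mx iota N.

Definition aut_iso_to (F : finFieldType) (f : {poly F}) (L : fieldType)
    (g : {poly L}) : Prop :=
  exists phi : 'M[F]_2 -> 'M[L]_2,
    [/\ {in aut_set f &, forall M N, phi (M *m N) = phi M *m phi N},
        {in aut_set f &, injective phi} &
        forall M : 'M[L]_2, is_aut_mx g M <-> exists2 N, N \in aut_set f & M = phi N].

From HB Require Import structures.
From mathcomp Require Import all_boot all_order all_algebra all_fingroup all_solvable all_field.
From mathcomp Require Import ring zify.
Set Implicit Arguments. Unset Strict Implicit. Unset Printing Implicit Defensive.
Import GRing.Theory.
Local Open Scope ring_scope.

(* The matrices [[a, b], [c, d]] inducing automorphisms of y^2 = x^5 + e x are the
   solutions of seven polynomial equations in a, b, c, d, which we solve by hand.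
   Let z be a primitive 8th root of unity and r a square root of 2, both in F_q.
   If p <> 5, the solutions are 48 explicit matrices with entries in Z[z, 1/r];
   they are the same over F_q and over any extension, which gives rationality.
   If p = 5, the change of variable x |-> z x turns the curve into y^2 = x^5 - x,
   for which the equations are Frobenius-linear: the solutions are the l N with
   N in GL_2(F_5) and l^2 = det N.  Picking one N in each class of PGL_2(F_5) gives
   2 * 120 = 240 matrices, defined over F_q since 2 and 3 = -2 = (r z^2)^2 are
   squares there.  In both cases the same change of variable identifies the group
   with the automorphism group of y^2 = x^5 - x over the algebraic closure. *)

Section Mx2.
Variable K : comNzRingType.

Definition mx2 (a b c d : K) : 'M[K]_2 :=
  \matrix_(i < 2, j < 2) if i == 0 then (if j == 0 then a else b) else (if j == 0 then c else d).

Lemma mx2E00 a b c d : mx2 a b c d 0 0 = a. Proof. by rewrite mxE. Qed.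
Lemma mx2E01 a b c d : mx2 a b c d 0 1 = b. Proof. by rewrite mxE. Qed.
Lemma mx2E10 a b c d : mx2 a b c d 1 0 = c. Proof. by rewrite mxE. Qed.
Lemma mx2E11 a b c d : mx2 a b c d 1 1 = d. Proof. by rewrite mxE. Qed.
Definition mx2E := (mx2E00, mx2E01, mx2E10, mx2E11).

Lemma mx2_eta (M : 'M[K]_2) : M = mx2 (M 0 0) (M 0 1) (M 1 0) (M 1 1).
Proof.
apply/matrixP=> i j; rewrite mxE.
by case: i => [[|[|//]] ?]; case: j => [[|[|//]] ?]; congr (M _ _); apply/val_inj.
Qed.

Lemma mx2_inj a b c d a' b' c' d' : mx2 a b c d = mx2 a' b' c' d' ->
  [/\ a = a', b = b', c = c' & d = d'].
Proof.
by move=> E; split; [rewrite -(mx2E00 a b c d) | rewrite -(mx2E01 a b c d)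
  | rewrite -(mx2E10 a b c d) | rewrite -(mx2E11 a b c d)]; rewrite E mx2E.
Qed.

Lemma det_mx2 a b c d : \det (mx2 a b c d) = a * d - b * c.
Proof.
rewrite (expand_det_row _ 0) !big_ord_recr big_ord0 /= add0r.
by rewrite /cofactor !det_mx11 !mxE /= /bump /= !expr0 !expr1 !mul1r; ring.
Qed.

Lemma mul_mx2 a b c d a' b' c' d' : mx2 a b c d *m mx2 a' b' c' d' =
  mx2 (a * a' + b * c') (a * b' + b * d') (c * a' + d * c') (c * b' + d * d').
Proof.
apply/matrixP=> i j; rewrite !mxE !big_ord_recr big_ord0 /= add0r !mxE /=.
by case: i => [[|[|//]] ?]; case: j => [[|[|//]] ?].
Qed.

Lemma scale_mx2 l a b c d : l *: mx2 a b c d = mx2 (l * a) (l * b) (l * c) (l * d).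
Proof. by apply/matrixP=> i j; rewrite !mxE; case: ifP; case: ifP. Qed.

End Mx2.

Lemma map_mx2 (F L : fieldType) (iota : {rmorphism F -> L}) (a b c d : F) :
  map_mx iota (mx2 a b c d) = mx2 (iota a) (iota b) (iota c) (iota d).
Proof. by apply/matrixP=> i j; rewrite !mxE; case: ifP; case: ifP. Qed.

Lemma neq0_of_exprS (K : idomainType) (x y : K) n : x^+n.+1 = y -> y != 0 -> x != 0.
Proof. by move=> <-; apply: contraNneq => ->; rewrite exprS mul0r. Qed.

Lemma eq_of_mul_sub (K : idomainType) (m x y : K) : m != 0 -> m * (x - y) = 0 -> x = y.
Proof. by move=> m0 /eqP; rewrite mulf_eq0 (negbTE m0) subr_eq0 => /eqP. Qed.

Ltac neq0 := repeat match goal with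
  | |- is_true (_ * _ != 0) => apply: mulf_neq0
  | |- is_true (_ ^+ _ != 0) => apply: expf_neq0
  | |- is_true (- _ != 0) => rewrite oppr_eq0
  | |- is_true (_^-1 != 0) => rewrite invr_eq0
  end; try done.

Section AutEquations.
Variable K : fieldType.
Implicit Types e u l a b c d D : K.

(* [aut_coef e a b c d k] is the coefficient of X^k in (cX+d)^6 f((aX+b)/(cX+d))
   for f = X^5 + e X, and [aut_rhs e D k] that of D f. *)
Definition aut_coef e a b c d (k : nat) : K :=
  match k with
  | 0 => b^+5*d + e*b*d^+5
  | 1 => b^+5*c + 5%:R*a*b^+4*d + e*(5%:R*b*c*d^+4 + a*d^+5)
  | 2 => 10%:R*a^+2*b^+3*d + 5%:R*a*b^+4*c + e*(5%:R*a*c*d^+4 + 10%:R*b*c^+2*d^+3)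
  | 3 => 10%:R*a^+3*b^+2*d + 10%:R*a^+2*b^+3*c + e*(10%:R*a*c^+2*d^+3 + 10%:R*b*c^+3*d^+2)
  | 4 => 10%:R*a^+3*b^+2*c + 5%:R*a^+4*b*d + e*(10%:R*a*c^+3*d^+2 + 5%:R*b*c^+4*d)
  | 5 => 5%:R*a^+4*b*c + a^+5*d + e*(5%:R*a*c^+4*d + b*c^+5)
  | 6 => a^+5*c + e*a*c^+5
  | _ => 0
  end.

Definition aut_rhs e D (k : nat) : K := if k == 5%N then D else if k == 1%N then e * D else 0.

Lemma aut_coef_poly e a b c d :
  \sum_(i < 7) ('X^5 + e%:P * 'X)`_i *: ((a *: 'X + b%:P) ^+ i * (c *: 'X + d%:P) ^+ (6 - i))
  = \poly_(k < 7) aut_coef e a b c d k.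
Proof.
rewrite poly_def !big_ord_recr big_ord0 /= !coefD !coefXn !coefCM !coefX /=.
by rewrite !mulr0 !mulr1 !add0r !addr0 !scale0r !add0r !addr0 -!mul_polyC /= big_ord0; ring.
Qed.

Lemma aut_rhs_poly e D : D *: ('X^5 + e%:P * 'X) = \poly_(k < 7) aut_rhs e D k.
Proof.
by rewrite poly_def !big_ord_recr big_ord0 /= /aut_rhs /= !scale0r !add0r !addr0 -!mul_polyC; ring.
Qed.

Lemma aut_coefZ e l a b c d k :
  aut_coef e (l * a) (l * b) (l * c) (l * d) k = l^+6 * aut_coef e a b c d k.
Proof. by case: k => [|[|[|[|[|[|[|k]]]]]]] /=; ring. Qed.

Lemma aut_rhsM e l D k : aut_rhs e (l * D) k = l * aut_rhs e D k.
Proof. by rewrite /aut_rhs; case: ifP => _; last case: ifP => _; ring. Qed.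

Definition aut_eqs e u a b c d : Prop :=
  forall k, u * aut_coef e a b c d k - aut_rhs e ((a * d - b * c)^+2) k = 0.

Lemma is_aut_mxZ e l a b c d : l != 0 ->
  is_aut_mx ('X^5 + e%:P * 'X) (l *: mx2 a b c d) <->
  a * d - b * c != 0 /\ aut_eqs e (l^+2) a b c d.
Proof.
move=> l0; rewrite scale_mx2 /is_aut_mx det_mx2 !mx2E aut_coef_poly aut_rhs_poly.
have -> : l * a * (l * d) - l * b * (l * c) = l^+2 * (a * d - b * c) by ring.
have l4 : l^+4 != 0 by rewrite expf_neq0.
have eq_k k : (aut_coef e (l * a) (l * b) (l * c) (l * d) k ==
     aut_rhs e ((l^+2 * (a * d - b * c))^+2) k) =
    (l^+2 * aut_coef e a b c d k - aut_rhs e ((a * d - b * c)^+2) k == 0).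
  rewrite aut_coefZ exprMn -exprM aut_rhsM -subr_eq0.
  rewrite (_ : _ - _ = l^+4 * (l^+2 * aut_coef e a b c d k
    - aut_rhs e ((a * d - b * c)^+2) k)); first exact: mulrI_eq0 (mulfI l4).
  ring.
rewrite mulf_eq0 expf_eq0 (negbTE l0) /=; split.
- case/andP=> -> /eqP /polyP E; split=> // k; apply/eqP.
  have := E k; rewrite !coef_poly; case: ltnP => [_ /eqP | k7 _]; first by rewrite eq_k.
  by case: k k7 => [|[|[|[|[|[|[|k]]]]]]] // _; rewrite /aut_rhs /= mulr0 subr0.
- case=> -> E; apply/eqP/polyP => k; rewrite !coef_poly.
  by case: ltnP => // _; apply/eqP; rewrite eq_k E.
Qed.

Lemma is_aut_mxP e a b c d :
  is_aut_mx ('X^5 + e%:P * 'X) (mx2 a b c d) <-> a * d - b * c != 0 /\ aut_eqs e 1 a b c d.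
Proof. by rewrite -(scale1r (mx2 a b c d)) is_aut_mxZ ?oner_neq0 // expr1n. Qed.

Definition aut_coef5 a b c d (k : nat) : K :=
  match k with
  | 0 => b^+5*d - b*d^+5
  | 1 => b^+5*c - a*d^+5
  | 5 => a^+5*d - b*c^+5
  | 6 => a^+5*c - a*c^+5
  | _ => 0
  end.

(* In characteristic 5 the binomial coefficients disappear (Frobenius). *)
Lemma aut_coef_char5 a b c d k : 5%:R = 0 :> K ->
  aut_coef (-1) a b c d k = aut_coef5 a b c d k.
Proof.
move=> h5; have h10 : 10%:R = 0 :> K by rewrite (natrM _ 2 5) h5 mulr0.
by case: k => [|[|[|[|[|[|[|k]]]]]]] //=; rewrite ?h5 ?h10; ring.
Qed.

(* x |-> z x maps y^2 = x^5 - x to y^2 = -z (x^5 + x), since z^5 = -z. *)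
Lemma aut_coef_twist z a b c d k : z^+4 = -1 ->
  z * (1 * aut_coef (-1) a b (c * z) d k - aut_rhs (-1) ((a * d - b * (c * z))^+2) k) =
  - z^+k * (1 * aut_coef 1 a (b * z) c d k - aut_rhs 1 ((a * d - b * z * c)^+2) k).
Proof.
by move=> hz; case: k => [|[|[|[|[|[|[|k]]]]]]]; rewrite /aut_rhs /=; ring: hz.
Qed.

Lemma aut_eqs_twist z a b c d : z^+4 = -1 ->
  aut_eqs 1 1 a (b * z) c d <-> aut_eqs (-1) 1 a b (c * z) d.
Proof.
move=> hz; have z0 : z != 0 by apply: (neq0_of_exprS (n := 3) hz); rewrite oppr_eq0 oner_eq0.
split=> H k; have := aut_coef_twist a b c d k hz.
  by rewrite H mulr0 => /eqP; rewrite mulf_eq0 (negbTE z0) => /eqP.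
rewrite H mulr0 => /esym/eqP.
by rewrite mulf_eq0 oppr_eq0 expf_eq0 (negbTE z0) andbF => /eqP.
Qed.

Lemma polyX5_addX : 'X^5 + 'X = 'X^5 + 1%:P * 'X :> {poly K}.
Proof. by rewrite polyC1 mul1r. Qed.

Lemma polyX5_subX : 'X^5 - 'X = 'X^5 + (-1)%:P * 'X :> {poly K}.
Proof. by rewrite polyCN polyC1 mulN1r. Qed.

Lemma is_aut_mx_twist z a b c d : z^+4 = -1 ->
  is_aut_mx ('X^5 + 'X) (mx2 a (b * z) c d) <-> is_aut_mx ('X^5 - 'X) (mx2 a b (c * z) d).
Proof.
move=> hz; rewrite polyX5_addX polyX5_subX !is_aut_mxP (aut_eqs_twist _ _ _ _ hz).
by rewrite (_ : a * d - b * z * c = a * d - b * (c * z)) //; ring.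
Qed.

End AutEquations.

Section EighthRoots.
Variables (K : fieldType) (z : K).
Hypotheses (hz : z^+4 = -1) (h2 : 2%:R != 0 :> K).

Lemma z_neq0 : z != 0.
Proof. by apply: (neq0_of_exprS (n := 3) hz); rewrite oppr_eq0 oner_eq0. Qed.

Lemma prim8_root : 8.-primitive_root z.
Proof.
have z8 : z^+8 = 1 by ring: hz.
have [m prim_m m_dvd8] := @prim_order_exists _ 8 z isT z8.
have m_dvd4 : (m %| 4)%N = false.
  rewrite (prim_order_dvd prim_m) hz; apply: contraNF h2 => /eqP e.
  by rewrite mulr2n -{1}e addNr.
have := dvdn_leq (isT : 0 < 8)%N m_dvd8.
by case: m prim_m m_dvd8 m_dvd4 => [|[|[|[|[|[|[|[|[|m]]]]]]]]].
Qed.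

Lemma expz_inj m n : (m < 8)%N -> (n < 8)%N -> z^+m = z^+n -> m = n.
Proof. by move=> hm hn /eqP; rewrite (eq_prim_root_expr prim8_root) !modn_small // => /eqP. Qed.

Lemma root8P w : w^+8 = 1 -> exists m : 'I_8, w = z^+m.
Proof. by case/(prim_rootP prim8_root) => m ->; exists m. Qed.

Lemma root4P s : s^+4 = -1 -> exists j : 'I_4, s = z^+(2 * j + 1).
Proof.
move=> hs; have : (s - z) * (s - z^+3) * (s - z^+5) * (s - z^+7) = 0 by ring: hs hz.
move/eqP; rewrite !mulf_eq0 !subr_eq0 -!orbA => /or4P[] /eqP ->.
- by exists (@Ordinal 4 0 isT).
- by exists (@Ordinal 4 1 isT).
- by exists (@Ordinal 4 2 isT).
- by exists (@Ordinal 4 3 isT).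
Qed.

End EighthRoots.

Section Aut48.
Variables (K : fieldType) (z r : K).
Hypotheses (hz : z^+4 = -1) (hr : r^+2 = 2%:R) (h2 : 2%:R != 0 :> K) (h5 : 5%:R != 0 :> K).
Implicit Types (w s a b c d : K).

Lemma r_neq0 : r != 0.
Proof. exact: (neq0_of_exprS (n := 1) hr). Qed.

Lemma is_aut_antidiag w : w^+8 = 1 -> is_aut_mx ('X^5 + 'X) (mx2 0 (w^+3) w 0).
Proof.
move=> hw; have w0 : w != 0 by apply: (neq0_of_exprS (n := 7) hw); rewrite oner_eq0.
rewrite polyX5_addX is_aut_mxP; split; first by rewrite mul0r sub0r oppr_eq0; neq0.
by case=> [|[|[|[|[|[|[|k]]]]]]]; rewrite /aut_rhs /=; ring: hw.
Qed.

Lemma is_aut_diag w : w^+8 = 1 -> is_aut_mx ('X^5 + 'X) (mx2 w 0 0 (w^+3)).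
Proof.
move=> hw; have w0 : w != 0 by apply: (neq0_of_exprS (n := 7) hw); rewrite oner_eq0.
rewrite polyX5_addX is_aut_mxP; split; first by rewrite mul0r subr0; neq0.
by case=> [|[|[|[|[|[|[|k]]]]]]]; rewrite /aut_rhs /=; ring: hw.
Qed.

Lemma is_aut_scaled w s : w^+8 = 1 -> s^+4 = -1 ->
  is_aut_mx ('X^5 + 'X) ((w / r) *: mx2 1 (- w^+2 * s^+3) s (- w^+2)).
Proof.
move=> hw hs; have w0 : w != 0 by apply: (neq0_of_exprS (n := 7) hw); rewrite oner_eq0.
have r0 := r_neq0.
have hl : 2%:R * (w / r)^+2 = w^+2 by rewrite expr_div_n hr mulrC divfK.
rewrite polyX5_addX is_aut_mxZ; last by neq0; rewrite invr_eq0.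
split.
  rewrite (_ : _ - _ = - (2%:R * w^+2)); first by neq0.
  by ring: hs.
move=> k; apply: (mulfI h2); rewrite mulr0 mulrBr mulrA hl.
by case: k => [|[|[|[|[|[|[|k]]]]]]]; rewrite /aut_rhs /=; ring: hw hs.
Qed.

Lemma aut_antidiagP b c d : is_aut_mx ('X^5 + 'X) (mx2 0 b c d) ->
  exists2 w, w^+8 = 1 & mx2 0 b c d = mx2 0 (w^+3) w 0.
Proof.
rewrite polyX5_addX is_aut_mxP mul0r sub0r oppr_eq0 mulf_eq0 negb_or => -[/andP[b0 c0] E].
move: (E 1%N) (E 4%N) (E 5%N); rewrite /aut_rhs /= => E1 E4 E5.
have hb : c^+3 = b.
  by apply: (eq_of_mul_sub (m := b * c^+2)); [neq0 | rewrite -[RHS]E5; ring].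
have hd : d = 0.
  by apply: (eq_of_mul_sub (m := 5%:R * b * c^+4)); [neq0 | rewrite -[RHS]E4; ring].
subst b d.
have hc : (c^+3)^+3 = c.
  by apply: (eq_of_mul_sub (m := (c^+3)^+2 * c)); [neq0 | rewrite -[RHS]E1; ring].
by exists c => //; apply: (eq_of_mul_sub c0); ring: hc.
Qed.

Lemma aut_diagP a b d : a != 0 -> is_aut_mx ('X^5 + 'X) (mx2 a b 0 d) ->
  exists2 w, w^+8 = 1 & mx2 a b 0 d = mx2 w 0 0 (w^+3).
Proof.
move=> a0; rewrite polyX5_addX is_aut_mxP mulr0 subr0 mulf_eq0 negb_or => -[/andP[_ d0] E].
move: (E 1%N) (E 4%N) (E 5%N); rewrite /aut_rhs /= => E1 E4 E5.
have hd : a^+3 = d.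
  by apply: (eq_of_mul_sub (m := a^+2 * d)); [neq0 | rewrite -[RHS]E5; ring].
have hb : b = 0.
  by apply: (eq_of_mul_sub (m := 5%:R * a^+4 * d)); [neq0 | rewrite -[RHS]E4; ring].
subst b d.
have ha : (a^+3)^+3 = a.
  by apply: (eq_of_mul_sub (m := a * (a^+3)^+2)); [neq0 | rewrite -[RHS]E1; ring].
by exists a => //; apply: (eq_of_mul_sub a0); ring: ha.
Qed.

Lemma aut_genericP a b c d : a != 0 -> c != 0 -> is_aut_mx ('X^5 + 'X) (mx2 a b c d) ->
  exists w s, [/\ w^+8 = 1, s^+4 = -1 & mx2 a b c d = (w / r) *: mx2 1 (- w^+2 * s^+3) s (- w^+2)].
Proof.
move=> a0 c0; rewrite polyX5_addX is_aut_mxP => -[D0 E].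
move: (E 0%N) (E 1%N) (E 2%N) (E 4%N) (E 5%N) (E 6%N); rewrite /aut_rhs /= => E0 E1 E2 E4 E5 E6.
have r0 := r_neq0; have h4 : 4%:R != 0 :> K by rewrite (natrM _ 2 2) mulf_neq0.
have h10 : 10%:R != 0 :> K by rewrite (natrM _ 2 5) mulf_neq0.
have [s hc] : exists s, c = a * s by exists (c / a); rewrite mulrC divfK.
subst c; have s0 : s != 0 by apply: contraNneq c0 => ->; rewrite mulr0.
have hs : s^+4 = -1.
  by apply: (eq_of_mul_sub (m := a^+6 * s)); [neq0 | rewrite -[RHS]E6; ring].
have b0 : b != 0.
  apply: contraNneq D0 => b0; subst b.
  have : d^+4 = 0.
    by apply: (eq_of_mul_sub (m := 5%:R * a^+2 * s)); [neq0 | rewrite -[RHS]E2; ring].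
  by move/eqP; rewrite expf_eq0 /= => /eqP ->; rewrite mulr0 mul0r subrr.
have d0 : d != 0.
  apply: contraNneq D0 => d0; subst d.
  have : b^+4 = 0.
    by apply: (eq_of_mul_sub (m := 5%:R * a^+2 * s)); [neq0 | rewrite -[RHS]E2; ring].
  by move/eqP; rewrite expf_eq0 (negbTE b0).
have [t hd] : exists t, d = b * t by exists (d / b); rewrite mulrC divfK.
subst d; have t0 : t != 0 by apply: contraNneq d0 => ->; rewrite mulr0.
have hst : s^+2 * t^+2 = -1.
  apply: (eq_of_mul_sub (m := 10%:R * a^+4 * b^+2 * s)); first by neq0.
  by rewrite -[RHS]E4; ring: hs.
have ht : t = - s.
  apply: (eq_of_mul_sub (m := s^+2 * (t - s))); last by ring: hs hst.
  neq0; rewrite subr_eq0; apply: contraNneq D0 => ->; apply/eqP; ring.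
subst t.
have hb : b = - 2%:R * a^+3 * s^+3.
  apply: (eq_of_mul_sub (m := - 4%:R * a^+2 * b * s^+2)); first by neq0.
  by rewrite -[RHS]E5; ring: hs.
subst b.
have hw : (a * r)^+8 = 1.
  by apply: (eq_of_mul_sub (m := (a * r)^+8)); [neq0 | rewrite -[RHS]E1; ring: hr hs].
exists (a * r), s; split=> //.
by rewrite scale_mx2 mulfK //; congr mx2; ring: hr hs.
Qed.

Definition aut48_index := ('I_2 * 'I_8 + 'I_8 * 'I_4)%type.

Definition aut48_mx (x : aut48_index) : 'M[K]_2 :=
  match x with
  | inl (k, m) => if k == ord0 then mx2 0 ((z^+m)^+3) (z^+m) 0 else mx2 (z^+m) 0 0 ((z^+m)^+3)
  | inr (m, j) => let w := z^+m in let s := z^+(2 * j + 1) in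
      (w / r) *: mx2 1 (- w^+2 * s^+3) s (- w^+2)
  end.

Lemma is_aut48 M : is_aut_mx ('X^5 + 'X) M <-> exists x, M = aut48_mx x.
Proof.
have root8 m : (z^+m)^+8 = 1 by rewrite -exprM mulnC exprM (_ : z^+8 = 1) ?expr1n //; ring: hz.
split; last first.
  case=> -[[k m]|[m j]] -> /=; first by case: ifP => _; [apply: is_aut_antidiag | apply: is_aut_diag].
  apply: is_aut_scaled => //.
  by rewrite -exprM mulnC exprM hz -signr_odd oddD oddM andFb expr1.
rewrite [M]mx2_eta; move: (M 0 0) (M 0 1) (M 1 0) (M 1 1) => a b c d.
have [->|a0] := eqVneq a 0.
  by case/aut_antidiagP => w /(root8P hz h2)[m ->] ->; exists (inl (ord0, m)).
have [->|c0] := eqVneq c 0.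
  by case/aut_diagP => // w /(root8P hz h2)[m ->] ->; exists (inl (ord_max, m)).
case/aut_genericP => // w [s [/(root8P hz h2)[m ->] /(root4P hz)[j ->] ->]].
by exists (inr (m, j)).
Qed.

Lemma aut48_mx_inj : injective aut48_mx.
Proof.
have r0 := r_neq0; have z0 := z_neq0 hz.
have zm0 m : z^+m != 0 by rewrite expf_neq0.
have l0 m : z^+m / r != 0 by rewrite mulf_neq0 ?invr_eq0.
have lb0 m j : z^+m / r * (- (z^+m)^+2 * (z^+(2 * j + 1))^+3) != 0 by neq0.
have ez (m m' : 'I_8) : z^+m = z^+m' -> m = m'.
  by move=> e; apply: val_inj; exact: (expz_inj hz h2 (ltn_ord m) (ltn_ord m') e).
have ez2 (j j' : 'I_4) : z^+(2 * j + 1) = z^+(2 * j' + 1) -> j = j'.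
  move=> e; apply: val_inj => /=; have hj := ltn_ord j; have hj' := ltn_ord j'.
  suff : (2 * j + 1 = 2 * j' + 1)%N by lia.
  by apply: (expz_inj hz h2) => //; lia.
have ord2 (k k' : 'I_2) : k = k' :> nat -> k = k' by move/val_inj.
move=> [[k m]|[m j]] [[k' m']|[m' j']] /=; rewrite ?scale_mx2.
- case: k k' => [[|[|//]] hk] [[|[|//]] hk'] /= /mx2_inj[e1 e2 e3 e4].
  + by rewrite (ez _ _ e3) (ord2 (Ordinal hk) (Ordinal hk')).
  + by move: (zm0 m'); rewrite -e1 eqxx.
  + by move: (zm0 m); rewrite e1 eqxx.
  + by rewrite (ez _ _ e1) (ord2 (Ordinal hk) (Ordinal hk')).
- case: ifP => _ /mx2_inj[e1 e2 _ _]; rewrite mulr1 in e1.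
  + by move: (l0 m'); rewrite -e1 eqxx.
  + by move: (lb0 m' j'); rewrite -e2 eqxx.
- case: ifP => _ /mx2_inj[e1 e2 _ _]; rewrite mulr1 in e1.
  + by move: (l0 m); rewrite e1 eqxx.
  + by move: (lb0 m j); rewrite e2 eqxx.
- move=> /mx2_inj[e1 _ e3 _]; rewrite !mulr1 in e1; rewrite e1 in e3.
  have em := ez _ _ (mulIf (invr_neq0 r0) e1); subst m'.
  by rewrite (ez2 _ _ (mulfI (l0 m) e3)).
Qed.

Lemma card_aut48_index : #|{: aut48_index}| = 48%N.
Proof. by rewrite card_sum !card_prod !card_ord. Qed.

End Aut48.

Section Twist.
Variables (K : fieldType) (z : K).
Hypothesis hz : z^+4 = -1.

Definition twist (M : 'M[K]_2) := mx2 (M 0 0) (M 0 1 / z) (M 1 0 * z) (M 1 1).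
Definition untwist (M : 'M[K]_2) := mx2 (M 0 0) (M 0 1 * z) (M 1 0 / z) (M 1 1).

Lemma twistK : cancel twist untwist.
Proof.
have z0 := z_neq0 hz.
by move=> M; rewrite [RHS]mx2_eta /untwist /twist !mx2E divfK // mulfK.
Qed.

Lemma untwistK : cancel untwist twist.
Proof.
have z0 := z_neq0 hz.
by move=> M; rewrite [RHS]mx2_eta /untwist /twist !mx2E divfK // mulfK.
Qed.

Lemma twistM A B : twist (A *m B) = twist A *m twist B.
Proof.
have z0 := z_neq0 hz.
rewrite [A]mx2_eta [B]mx2_eta mul_mx2 /twist !mx2E mul_mx2.
by congr mx2; field.
Qed.

Lemma is_aut_mx_twistE M :
  is_aut_mx ('X^5 + 'X) M <-> is_aut_mx ('X^5 - 'X) (twist M).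
Proof.
rewrite [M in is_aut_mx _ M]mx2_eta /twist -is_aut_mx_twist // divfK //.
exact: z_neq0 hz.
Qed.

End Twist.

Lemma frobenius_fixed (R : idomainType) (B C D : R) : D - B * C != 0 ->
  D^+5 - D = C * (B^+5 - B) -> B^+5 * D = B * D^+5 -> B^+5 = B /\ D^+5 = D.
Proof.
move=> det0 eD5 eBD; have e0 : (0 : R)^+5 = 0 by rewrite exprS mul0r.
have [B0|B0] := eqVneq B 0.
  subst B; move: eD5; rewrite e0 subrr mulr0 => /eqP; rewrite subr_eq0 => /eqP.
  by split.
have [D0|D0] := eqVneq D 0.
  subst D; split=> //.
  have C0 : C != 0 by apply: contraNneq det0 => ->; rewrite mulr0 subrr.
  move: eD5; rewrite e0 subrr => /esym/eqP.
  by rewrite mulf_eq0 (negbTE C0) subr_eq0 => /eqP.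
have hB4 : B^+4 = D^+4.
  apply: (eq_of_mul_sub (m := B * D)); first by neq0.
  by rewrite (_ : _ * _ = B^+5 * D - B * D^+5); [rewrite eBD subrr | ring].
have hD4 : D^+4 = 1.
  apply: (eq_of_mul_sub (m := D - C * B)); first by rewrite mulrC.
  by rewrite (_ : _ * _ = D^+5 - D - C * (B^+5 - B)); [rewrite eD5 subrr | ring: hB4].
by split; rewrite exprS ?hB4 hD4 mulr1.
Qed.

(* (sg, kd, b, c, d) stands for the class in PGL_2(F_5) of [[1, b], [c, d]] if kd,
   and of [[0, 1], [c, d]] otherwise, together with a sign. *)
Definition aut240_index := (bool * bool * 'I_5 * 'I_5 * 'I_5)%type.

Definition pgl5_det (kd : bool) (b c d : nat) : nat :=
  if kd then ((d + 4 * b * c) %% 5)%N else ((4 * c) %% 5)%N.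

Definition pgl5_rep (kd : bool) (b c d : nat) : bool :=
  (pgl5_det kd b c d != 0%N) && (kd || (b == 0%N)).

Definition aut240_rep (x : aut240_index) : bool :=
  let: (_, kd, b, c, d) := x in pgl5_rep kd b c d.

Lemma pgl5_det_bound (kd : bool) (b c d : nat) : pgl5_rep kd b c d -> (0 < pgl5_det kd b c d < 5)%N.
Proof. by case/andP; rewrite lt0n => -> _ /=; case: kd; rewrite ltn_mod. Qed.

Lemma card_aut240_rep : #|aut240_rep| = 240%N.
Proof.
have sum_pair (A B : finType) (G : A * B -> nat) :
    (\sum_(p : A * B) G p = \sum_(a : A) \sum_(b : B) G (a, b))%N.
  by rewrite pair_bigA; apply: eq_bigr => -[].
rewrite -sum1_card big_mkcond /= !sum_pair /=.
transitivity (\sum_(sg : bool) \sum_(kd : bool) \sum_(b < 5) \sum_(c < 5) \sum_(d < 5)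
    (pgl5_rep kd b c d : nat))%N.
  by do 5! (apply: eq_bigr => ? _); rewrite unfold_in /=; case: pgl5_rep.
have nat_range kd : (\sum_(b < 5) \sum_(c < 5) \sum_(d < 5) (pgl5_rep kd b c d : nat) =
    \sum_(0 <= b < 5) \sum_(0 <= c < 5) \sum_(0 <= d < 5) (pgl5_rep kd b c d : nat))%N.
  rewrite big_mkord; apply: eq_bigr => b _; rewrite big_mkord.
  by apply: eq_bigr => c _; rewrite big_mkord.
by rewrite !big_bool !nat_range unlock; vm_compute.
Qed.

Section Char5.
Variables (K : fieldType) (z r : K).
Hypotheses (hz : z^+4 = -1) (hr : r^+2 = 2%:R) (h2 : 2%:R != 0 :> K) (h5 : 5%:R = 0 :> K).
Implicit Types (l a b c d : K).

Lemma natr_mod5 n : (n %% 5)%:R = n%:R :> K.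
Proof. by rewrite {2}(divn_eq n 5) natrD natrM h5 mulr0 add0r. Qed.

Lemma natr5_eq0 n : (n%:R == 0 :> K) = (5 %| n)%N.
Proof. by rewrite -(@dvdn_pcharf _ 5) // inE /= h5 eqxx. Qed.

Lemma natr5_inj m n : (m < 5)%N -> (n < 5)%N -> m%:R = n%:R :> K -> m = n.
Proof.
wlog le_mn : m n / (m <= n)%N => [hw hm hn e|hm hn e].
  by case/orP: (leq_total m n) => [/hw|/hw/(_ hn hm (esym e))/esym]; apply.
have : (n - m)%:R == 0 :> K by rewrite natrB // e subrr.
by rewrite natr5_eq0 => /dvdnP[k hk]; lia.
Qed.

Lemma natr5_frobenius n : (n < 5)%N -> (n%:R : K)^+5 = n%:R.
Proof.
move=> hn; rewrite -natrX -natr_mod5 -[RHS]natr_mod5.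
by case: n hn => [|[|[|[|[|n]]]]].
Qed.

Lemma F5_roots (x : K) : x^+5 = x -> exists k : 'I_5, x = k%:R.
Proof.
move=> hx; have : x * (x - 1) * (x - 2%:R) * (x - 3%:R) * (x - 4%:R) = 0.
  (* the product is x^5 - x + 5 (7 x^3 - 2 x^4 - 10 x^2 + 5 x) *)
  rewrite -(mul0r (7%:R * x^+3 - 2%:R * x^+4 - 10%:R * x^+2 + 5%:R * x)) -h5.
  by ring: hx.
move/eqP; rewrite !mulf_eq0 -!orbA !subr_eq0 => /orP[|/or4P[]] /eqP ->.
- by exists ord0.
- by exists (inord 1); rewrite inordK.
- by exists (inord 2); rewrite inordK.
- by exists (inord 3); rewrite inordK.
- by exists (inord 4); rewrite inordK.
Qed.

Lemma natr5_m1 : 4%:R = -1 :> K.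
Proof. by apply/eqP; rewrite -subr_eq0 opprK natr1 h5. Qed.

(* Square roots in K of 1, 2, 3 = -2 and 4. *)
Definition sqrt5 (n : nat) : K :=
  match n with 1 => 1 | 2 => r | 3 => r * z^+2 | 4 => 2%:R | _ => 0 end.

Lemma sqrt5_sq n : (0 < n < 5)%N -> sqrt5 n ^+ 2 = n%:R.
Proof.
case: n => [|[|[|[|[|n]]]]] //= _; rewrite ?expr1n ?hr -?natrX //.
rewrite (_ : (r * z^+2)^+2 = - 2%:R); last by ring: hr hz.
by apply/eqP; rewrite -subr_eq0 -opprD -natrD h5 oppr0.
Qed.

Lemma sqrt5_neq0 n : (0 < n < 5)%N -> sqrt5 n != 0.
Proof.
move=> hn; apply: (neq0_of_exprS (n := 1) (sqrt5_sq hn)).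
by rewrite natr5_eq0; case: n hn => [|[|[|[|[|n]]]]].
Qed.

Definition pgl5_mx (kd : bool) (b c d : nat) : 'M[K]_2 :=
  mx2 kd%:R (if kd then b%:R else 1) c%:R d%:R.

Lemma pgl5_detE (kd : bool) (b c d : nat) :
  (pgl5_det kd b c d)%:R = kd%:R * d%:R - (if kd then b%:R else 1) * c%:R :> K.
Proof.
rewrite /pgl5_det; case: kd; rewrite natr_mod5.
- by rewrite natrD !natrM natr5_m1 /=; ring.
- by rewrite natrM natr5_m1 /=; ring.
Qed.

Definition aut240_scale (x : aut240_index) : K :=
  let: (sg, kd, b, c, d) := x in (-1)^+sg * sqrt5 (pgl5_det kd b c d).

Definition aut240_mx (x : aut240_index) : 'M[K]_2 :=
  let: (sg, kd, b, c, d) := x in aut240_scale x *: pgl5_mx kd b c d.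

Lemma aut240_scale_neq0 x : aut240_rep x -> aut240_scale x != 0.
Proof.
case: x => [[[[sg kd] b] c] d] /pgl5_det_bound hn.
by rewrite mulf_neq0 ?sqrt5_neq0 // signr_eq0.
Qed.

Lemma is_aut_char5 l a b c d : l != 0 -> l^+2 = a * d - b * c ->
  a^+5 = a -> b^+5 = b -> c^+5 = c -> d^+5 = d -> is_aut_mx ('X^5 - 'X) (l *: mx2 a b c d).
Proof.
move=> l0 hl ha hb hc hd; rewrite polyX5_subX is_aut_mxZ //; split; first by rewrite -hl; neq0.
move=> k; rewrite aut_coef_char5 //.
by case: k => [|[|[|[|[|[|[|k]]]]]]]; rewrite /aut_rhs /=; ring: hl ha hb hc hd.
Qed.

Lemma aut240_mx_aut x : aut240_rep x -> is_aut_mx ('X^5 - 'X) (aut240_mx x).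
Proof.
move=> rep; have l0 := aut240_scale_neq0 rep.
case: x rep l0 => [[[[sg kd] b] c] d] /pgl5_det_bound hn l0.
apply: is_aut_char5 => //; rewrite ?natr5_frobenius //.
- by rewrite exprMn sqrr_sign mul1r sqrt5_sq // pgl5_detE.
- by case: (kd); rewrite /= ?expr1n ?expr0n.
- by case: (kd); rewrite ?(natr5_frobenius (ltn_ord b)) ?expr1n.
Qed.

Definition pgl5_multiple (M : 'M[K]_2) : Prop :=
  exists l kd (b c d : 'I_5), [/\ pgl5_rep kd b c d, l^+2 = (pgl5_det kd b c d)%:R
    & M = l *: pgl5_mx kd b c d].

Lemma pgl5_rep_of_det kd (b c d : 'I_5) : kd || (b == 0%N :> nat) ->
  kd%:R * d%:R - (if kd then b%:R else 1) * c%:R != 0 :> K -> pgl5_rep kd b c d.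
Proof.
move=> kdb; rewrite -pgl5_detE /pgl5_rep kdb andbT.
by apply: contraNneq => ->.
Qed.

Lemma pgl5_multiple_antidiag b c d :
  is_aut_mx ('X^5 - 'X) (mx2 0 b c d) -> pgl5_multiple (mx2 0 b c d).
Proof.
rewrite polyX5_subX is_aut_mxP mul0r sub0r oppr_eq0 mulf_eq0 negb_or => -[/andP[b0 c0] E].
move: (E 0%N) (E 1%N) (E 5%N); rewrite !aut_coef_char5 // /aut_rhs /= => E0 E1 E5.
have [C hc] : exists C, c = b * C by exists (c / b); rewrite mulrC divfK.
have [D hd] : exists D, d = b * D by exists (d / b); rewrite mulrC divfK.
subst c d; have C0 : C != 0 by apply: contraNneq c0 => ->; rewrite mulr0.
have hC : C = - b^+2.
  by apply: (eq_of_mul_sub (m := b^+4 * C)); [neq0 | rewrite -[RHS]E1; ring].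
have hbC : b^+2 * C^+3 = -1.
  by apply: (eq_of_mul_sub (m := - (b^+4 * C^+2))); [neq0 | rewrite -[RHS]E5; ring].
have hC4 : C^+4 = 1 by rewrite exprS {1}hC mulNr hbC opprK.
have hC5 : C^+5 = C by rewrite exprSr hC4 mul1r.
have hD5 : D^+5 = D.
  by apply: (eq_of_mul_sub (m := - b^+6)); [neq0 | rewrite -[RHS]E0; ring].
have [g hg] := F5_roots hC5; have [e he] := F5_roots hD5.
exists b, false, ord0, g, e; split.
- by apply: pgl5_rep_of_det => //=; rewrite -hg mul0r sub0r mul1r oppr_eq0.
- by rewrite pgl5_detE /= -hg mul0r sub0r mul1r hC opprK.
- by rewrite scale_mx2 /= -hg -he mulr0 mulr1.
Qed.

Lemma pgl5_multiple_generic a b c d : a != 0 ->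
  is_aut_mx ('X^5 - 'X) (mx2 a b c d) -> pgl5_multiple (mx2 a b c d).
Proof.
move=> a0; rewrite polyX5_subX is_aut_mxP => -[D0 E].
move: (E 0%N) (E 1%N) (E 5%N) (E 6%N); rewrite !aut_coef_char5 // /aut_rhs /= => E0 E1 E5 E6.
have [B hb] : exists B, b = a * B by exists (b / a); rewrite mulrC divfK.
have [C hc] : exists C, c = a * C by exists (c / a); rewrite mulrC divfK.
have [D hd] : exists D, d = a * D by exists (d / a); rewrite mulrC divfK.
subst b c d; have det0 : D - B * C != 0.
  apply: contraNneq D0 => e; apply/eqP.
  by rewrite (_ : _ - _ = a^+2 * (D - B * C)); [rewrite e mulr0 | ring].
have hC5 : C^+5 = C.
  by apply: (eq_of_mul_sub (m := - a^+6)); [neq0 | rewrite -[RHS]E6; ring].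
have ha2 : a^+2 = D - B * C.
  apply: (eq_of_mul_sub (m := a^+4 * (D - B * C))); first by neq0.
  by rewrite -[RHS]E5; ring: hC5.
have eD5 : D^+5 - D = C * (B^+5 - B).
  by apply: (eq_of_mul_sub (m := - a^+6)); [neq0 | rewrite -[RHS]E1; ring: ha2].
have eBD : B^+5 * D = B * D^+5.
  by apply: (eq_of_mul_sub (m := a^+6)); [neq0 | rewrite -[RHS]E0; ring].
have [hB5 hD5] := frobenius_fixed det0 eD5 eBD.
have [bt hbt] := F5_roots hB5; have [g hg] := F5_roots hC5; have [e he] := F5_roots hD5.
exists a, true, bt, g, e; split.
- by apply: pgl5_rep_of_det => //=; rewrite -hbt -hg -he mul1r.
- by rewrite pgl5_detE /= -hbt -hg -he mul1r.
- by rewrite scale_mx2 /= -hbt -hg -he mulr1.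
Qed.

Lemma aut240P M : is_aut_mx ('X^5 - 'X) M -> exists2 x, aut240_rep x & M = aut240_mx x.
Proof.
rewrite [M]mx2_eta; move: (M 0 0) (M 0 1) (M 1 0) (M 1 1) => a b c d aut.
have [l [kd [b' [c' [d' [rep hl ->]]]]]] : pgl5_multiple (mx2 a b c d).
  have [a0|a0] := eqVneq a 0; last exact: pgl5_multiple_generic.
  by subst a; apply: pgl5_multiple_antidiag.
have : (l == sqrt5 (pgl5_det kd b' c' d')) || (l == - sqrt5 (pgl5_det kd b' c' d')).
  by rewrite -eqf_sqr hl sqrt5_sq ?pgl5_det_bound.
case/orP => /eqP ->.
- by exists (false, kd, b', c', d'); rewrite //= mul1r.
- by exists (true, kd, b', c', d'); rewrite //= mulN1r.
Qed.

Lemma pgl5_multiple_inj l l' kd kd' (b c d b' c' d' : 'I_5) : l != 0 -> l' != 0 ->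
  pgl5_rep kd b c d -> pgl5_rep kd' b' c' d' -> l *: pgl5_mx kd b c d = l' *: pgl5_mx kd' b' c' d' ->
  [/\ l = l', kd = kd', b = b', c = c' & d = d'].
Proof.
move=> l0 l0' /andP[_ rb] /andP[_ rb']; rewrite !scale_mx2 => /mx2_inj[e1 e2 e3 e4].
have ekd : kd = kd'.
  move: e1; case: (kd) (kd') => [] [] //= /eqP; rewrite mulr1 mulr0 ?(negbTE l0) //.
  by rewrite eq_sym (negbTE l0').
subst kd'; have ell' : l = l'.
  by move: e1 e2; case: (kd) => /= [e1 _ | _ e2]; [move: e1 | move: e2]; rewrite !mulr1.
subst l'; have eo (u v : 'I_5) : l * u%:R = l * v%:R -> u = v.
  by move=> /(mulfI l0) /(natr5_inj (ltn_ord u) (ltn_ord v)) /val_inj.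
split=> //; [|exact: eo e3|exact: eo e4].
case: kd rb rb' e1 e2 => /= [_ _ _ /eo //|/eqP eb /eqP eb' _ _].
by apply: val_inj; rewrite /= eb eb'.
Qed.

Lemma aut240_mx_inj : {in aut240_rep &, injective aut240_mx}.
Proof.
move=> x y rx ry; have lx := aut240_scale_neq0 rx; have ly := aut240_scale_neq0 ry.
move: x y rx ry lx ly => [[[[sg kd] b] c] d] [[[[sg' kd'] b'] c'] d'] /= rx ry lx ly.
case/(pgl5_multiple_inj lx ly rx ry) => + ekd eb ec ed; subst kd' b' c' d'.
have s0 := sqrt5_neq0 (pgl5_det_bound rx); rewrite /aut240_scale.
case: sg sg' {lx ly rx ry} => [] [] // /eqP; rewrite ?mulN1r ?mul1r.
- by rewrite eq_sym -addr_eq0 -mulr2n -mulr_natl mulf_eq0 (negbTE h2) (negbTE s0).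
- by rewrite -addr_eq0 -mulr2n -mulr_natl mulf_eq0 (negbTE h2) (negbTE s0).
Qed.

Lemma is_aut240 M :
  is_aut_mx ('X^5 + 'X) M <-> exists2 x, aut240_rep x & M = untwist z (aut240_mx x).
Proof.
rewrite (is_aut_mx_twistE hz); split.
  by case/aut240P => x rx eM; exists x; rewrite // -eM twistK.
by case=> x rx ->; rewrite untwistK //; apply: aut240_mx_aut.
Qed.

End Char5.

Section Rmorph.
Variables (F L : fieldType) (iota : {rmorphism F -> L}).

Lemma rmorph_root8 (z : F) : z^+4 = -1 -> iota z ^+ 4 = -1.
Proof. by rewrite -rmorphXn => ->; rewrite rmorphN1. Qed.

Lemma rmorph_sqrt2 (r : F) : r^+2 = 2%:R -> iota r ^+ 2 = 2%:R.
Proof. by rewrite -rmorphXn => ->; rewrite rmorph_nat. Qed.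

Lemma rmorph_natr_eq0 n : (n%:R == 0 :> L) = (n%:R == 0 :> F).
Proof. by rewrite -(rmorph_nat iota) fmorph_eq0. Qed.

End Rmorph.

Section Rationality.
Variables (F : finFieldType) (L : fieldType) (iota : {rmorphism F -> L}).
Variables (D : finType) (P : pred D) (eF : D -> 'M[F]_2) (eL : D -> 'M[L]_2) (z : F).
Hypotheses (hz : z^+4 = -1)
  (autF : forall M, is_aut_mx ('X^5 + 'X) M <-> exists2 x, P x & M = eF x)
  (autL : forall M, is_aut_mx ('X^5 + 'X) M <-> exists2 x, P x & M = eL x)
  (map_e : forall x, map_mx iota (eF x) = eL x).

Lemma card_aut_set_param : {in P &, injective eF} -> #|aut_set ('X^5 + 'X : {poly F})| = #|P|.
Proof.
move=> inj; rewrite -(card_in_imset inj); apply: eq_card => M.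
rewrite inE; apply/idP/imsetP => [/autF[x Px ->]|[x Px ->]]; first by exists x.
by apply/autF; exists x.
Qed.

Lemma auts_rational_iso :
  all_auts_rational ('X^5 + 'X) iota /\ aut_iso_to ('X^5 + 'X : {poly F}) ('X^5 - 'X : {poly L}).
Proof.
have hzL := rmorph_root8 iota hz.
have eF_aut x : P x -> eF x \in aut_set ('X^5 + 'X : {poly F}).
  by move=> Px; rewrite inE; apply/autF; exists x.
split.
  move=> M; rewrite rmorphD /= map_polyXn map_polyX => /autL[x Px ->].
  by exists (eF x); rewrite ?eF_aut ?map_e.
exists (fun N => twist (iota z) (map_mx iota N)); split.
- by move=> M N _ _; rewrite map_mxM twistM.
- by move=> M N _ _ /(can_inj (twistK hzL)) /map_mx_inj.
move=> M; split.
  rewrite -{1}[M](untwistK hzL) -is_aut_mx_twistE // => /autL[x Px eM].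
  by exists (eF x); rewrite ?eF_aut // map_e -eM untwistK.
case=> N; rewrite inE => /autF[x Px ->] ->.
by rewrite map_e -is_aut_mx_twistE //; apply/autL; exists x.
Qed.

End Rationality.

Section Maps.
Variables (F L : fieldType) (iota : {rmorphism F -> L}) (z r : F).

Lemma map_aut48_mx x : map_mx iota (aut48_mx z r x) = aut48_mx (iota z) (iota r) x.
Proof.
case: x => [[k m]|[m j]] /=.
  by case: ifP => _; rewrite map_mx2 ?(rmorph0, rmorphXn).
by rewrite map_mxZ map_mx2 ?(rmorph1, rmorphXn, rmorphM, rmorphN, fmorphV).
Qed.

Lemma map_sqrt5 n : iota (sqrt5 z r n) = sqrt5 (iota z) (iota r) n.
Proof. by case: n => [|[|[|[|[|n]]]]]; rewrite /= ?(rmorph0, rmorph1, rmorphM, rmorphXn, rmorph_nat). Qed.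

Lemma map_untwist M : map_mx iota (untwist z M) = untwist (iota z) (map_mx iota M).
Proof. by rewrite map_mx2 /untwist !mxE !rmorphM fmorphV. Qed.

Lemma map_aut240_mx x : map_mx iota (aut240_mx z r x) = aut240_mx (iota z) (iota r) x.
Proof.
case: x => [[[[sg kd] b] c] d]; rewrite /aut240_mx /aut240_scale /pgl5_mx map_mxZ map_mx2.
by rewrite rmorphM rmorphXn rmorphN1 map_sqrt5 !rmorph_nat; case: kd; rewrite ?rmorph1 ?rmorph_nat.
Qed.

End Maps.

Lemma exists_root8 (F : finFieldType) : (8 %| #|F|.-1)%N -> exists z : F, z^+4 = -1.
Proof.
move=> h8.
have /cyclicP [g defG] := field_unit_group_cyclic [set: {unit F}]%G.
have og : #[g]%g = #|F|.-1 by rewrite orderE -defG card_finField_unit.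
pose m := (#|F|.-1 %/ 8)%N.
have hm : #|F|.-1 = (m * 8)%N by rewrite divnK.
have mpos : (0 < m)%N.
  have : (0 < #|F|.-1)%N by rewrite -card_finField_unit cardG_gt0.
  by rewrite hm muln_gt0 => /andP [].
pose y : F := val (g ^+ m)%g.
have y8 : y ^+ 8 = 1 by rewrite /y -FinRing.val_unitX -expgM -hm -og expg_order.
have y4 : y ^+ 4 != 1.
  rewrite /y -FinRing.val_unitX -expgM; apply/eqP => h.
  have : (g ^+ (m * 4))%g = 1%g by apply: val_inj; rewrite h.
  by move/eqP; rewrite -order_dvdn og hm dvdn_pmul2l.
exists y; have : (y^+4 - 1) * (y^+4 + 1) = 0 by ring: y8.
by move/eqP; rewrite mulf_eq0 subr_eq0 (negbTE y4) /= addr_eq0 => /eqP.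
Qed.

Lemma aut_X5X_48 (F : finFieldType) (z r : F) :
  z^+4 = -1 -> r^+2 = 2%:R -> (2%:R != 0 :> F) -> (5%:R != 0 :> F) ->
  #|aut_set ('X^5 + 'X : {poly F})| = 48%N /\
  forall (L : fieldType) (iota : {rmorphism F -> L}),
    all_auts_rational ('X^5 + 'X) iota /\ aut_iso_to ('X^5 + 'X : {poly F}) ('X^5 - 'X : {poly L}).
Proof.
have aut48 (K : fieldType) (z' r' : K) : z'^+4 = -1 -> r'^+2 = 2%:R -> (2%:R != 0 :> K) ->
    (5%:R != 0 :> K) -> forall M, is_aut_mx ('X^5 + 'X) M <-> exists2 x, xpredT x & M = aut48_mx z' r' x.
  move=> hz' hr' h2' h5' M; rewrite (is_aut48 hz' hr' h2' h5').
  by split=> [[x ->]|[x _ ->]]; exists x.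
move=> hz hr h2 h5; have autF := aut48 _ _ _ hz hr h2 h5; split.
  rewrite (card_aut_set_param autF) -?card_aut48_index; first exact: eq_card.
  by move=> x y _ _; apply: aut48_mx_inj.
move=> L iota; apply: (auts_rational_iso hz autF _ (map_aut48_mx iota z r)).
apply: aut48; first exact: rmorph_root8.
- exact: rmorph_sqrt2.
- by rewrite (rmorph_natr_eq0 iota).
- by rewrite (rmorph_natr_eq0 iota).
Qed.

Lemma aut_X5X_240 (F : finFieldType) (z r : F) :
  z^+4 = -1 -> r^+2 = 2%:R -> (2%:R != 0 :> F) -> (5%:R = 0 :> F) ->
  #|aut_set ('X^5 + 'X : {poly F})| = 240%N /\
  forall (L : fieldType) (iota : {rmorphism F -> L}),
    all_auts_rational ('X^5 + 'X) iota /\ aut_iso_to ('X^5 + 'X : {poly F}) ('X^5 - 'X : {poly L}).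
Proof.
move=> hz hr h2 h5; have autF := is_aut240 hz hr h5; split.
  rewrite (card_aut_set_param autF) ?card_aut240_rep // => x y rx ry.
  by move/(can_inj (untwistK hz)); apply: aut240_mx_inj.
move=> L iota.
have map_e x : map_mx iota (untwist z (aut240_mx z r x)) = untwist (iota z) (aut240_mx (iota z) (iota r) x).
  by rewrite map_untwist map_aut240_mx.
apply: (auts_rational_iso hz autF _ map_e).
apply: (is_aut240 (rmorph_root8 iota hz) (rmorph_sqrt2 iota hr)).
by apply/eqP; rewrite (rmorph_natr_eq0 iota) h5.
Qed.

Theorem mainTheorem2 (F : finFieldType) (p : nat) :
  prime p -> p != 2%N -> p \in [pchar F] ->
  (8 %| #|F|.-1)%N -> (exists s : F, s ^+ 2 = 2%:R) ->
  let f : {poly F} := 'X^5 + 'X in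
  ((p != 3%N) -> (p != 5%N) ->
     #|aut_set f| = 48%N /\
     forall (L : closedFieldType) (iota : {rmorphism F -> L}),
       is_alg_closure iota ->
       all_auts_rational f iota /\ aut_iso_to f ('X^5 - 'X : {poly L}))
  /\
  ((p = 5%N) ->
     #|aut_set f| = 240%N /\
     forall (L : closedFieldType) (iota : {rmorphism F -> L}),
       is_alg_closure iota ->
       all_auts_rational f iota /\ aut_iso_to f ('X^5 - 'X : {poly L})).
Proof.
move=> p_pr p_neq2 p_char q8 [r hr] f.
have [z hz] := exists_root8 q8.
have h2 : 2%:R != 0 :> F by rewrite -(dvdn_pcharf p_char) dvdn_prime2.
split=> [_ p_neq5 | p5].
  have h5 : 5%:R != 0 :> F by rewrite -(dvdn_pcharf p_char) dvdn_prime2.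
  have [card48 rational] := aut_X5X_48 hz hr h2 h5.
  by split=> // L iota _; apply: rational.
have h5 : 5%:R = 0 :> F by apply/eqP; rewrite -(dvdn_pcharf p_char) p5.
have [card240 rational] := aut_X5X_240 hz hr h2 h5.
by split=> // L iota _; apply: rational.
Qed.
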